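(* Let $G$ be a connected finite simple graph on $[n]$ and let $S:=\{\ker x_1,\dots,\ker x_n,\ker(x_1+\dots+x_n)\}\subseteq\mathcal{A}_G$. Then $\langle S\rangle_{\mathcal{A}_G}=\mathcal{A}_G$. In particular, $\mathcal{A}_G$ is projectively unique over $\mathbb{Q}$.
   Context: Let $G=(N,E)$ be a finite simple graph with vertex set $N=[n]=\{1,\dots,n\}$. For $\varnothing\neq I\subseteq N$, $G[I]$ denotes the induced subgraph on $I$, and $H_I:=\ker\big(\sum_{i\in I}x_i\big)$, where $x_1,\dots,x_n$ are the coordinate functions on $\mathbb{Q}^n$. The connected subgraph arrangement is $\mathcal{A}_G:=\{H_I\mid \varnothing\neq I\subseteq N,\ G[I]\text{ connected}\}$. $L(\mathcal{A})$ is the set of intersections of subsets of $\mathcal{A}$, ordered by reverse inclusion. For $\varnothing\neq S\subseteq\mathcal{A}$: $\mathrm{Gen}_0(\mathcal{A},S):=S$, $\mathrm{Gen}_{i+1}(\mathcal{A},S):=\{H\in\mathcal{A}\mid \exists\, J\subseteq L(\mathrm{Gen}_i(\mathcal{A},S)),\ H=\sum_{X\in J}X\}$, and $\langle S\rangle_{\mathcal{A}}:=\bigcup_{i\ge0}\mathrm{Gen}_i(\mathcal{A},S)$. Projectively unique means: every arrangement $\mathcal{C}$ in $\mathbb{Q}^n$ with $L(\mathcal{C})\cong L(\mathcal{A}_G)$ as posets equals $\varphi(\mathcal{A}_G)$ for some $\varphi\in\mathrm{GL}(\mathbb{Q}^n)$. *)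

From HB Require Import structures.
From mathcomp Require Import all_boot all_order all_algebra.
From mathcomp Require Import finmap.
Set Implicit Arguments.
Unset Strict Implicit.
Unset Printing Implicit Defensive.
Import Order.TTheory GRing.Theory Num.Theory.
Local Open Scope ring_scope.
Local Open Scope fset_scope.

(* The ambient space Q^n is the space of row vectors 'rV[rat]_n;
   the coordinate function x_i is  v |-> v ord0 i. *)
Notation Qn n := 'rV[rat]_n.
Notation subsp n := {vspace 'rV[rat]_n}.

Definition sumform n (I : {set 'I_n}) : 'Hom(Qn n, rat^o) :=
  linfun (fun v : Qn n => (\sum_(i in I) v ord0 i : rat^o)).

Definition HI n (I : {set 'I_n}) : subsp n := lker (sumform I).

Definition hyperplane n (H : subsp n) : Prop := \dim H = n.-1.

Definition arrangement n (A : {fset subsp n}) : Prop :=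
  forall H, H \in A -> hyperplane H.

Definition simple_graph n (e : rel 'I_n) : Prop := symmetric e /\ irreflexive e.

Definition induced_connected n (e : rel 'I_n) (I : {set 'I_n}) : bool :=
  [forall x in I, forall y in I,
    connect [rel u v | [&& u \in I, v \in I & e u v]] x y].

Definition graph_connected n (e : rel 'I_n) : Prop := induced_connected e setT.

Definition conn_sets n (e : rel 'I_n) : pred {set 'I_n} :=
  fun I => (I != set0) && induced_connected e I.

Definition AG n (e : rel 'I_n) : {fset subsp n} :=
  [fset HI I | I in conn_sets e].

(* L(P): the intersections of (finite) subsets of a family P of subspaces
   (the empty intersection being the whole space). *)
Definition inL n (P : subsp n -> Prop) (X : subsp n) : Prop :=
  exists B : {fset subsp n},
    (forall H, H \in B -> P H) /\ X = (\bigcap_(H <- B) H)%VS.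

Fixpoint Gen n (A S : {fset subsp n}) (i : nat) : subsp n -> Prop :=
  match i with
  | 0 => fun H => H \in S
  | i'.+1 => fun H => H \in A /\
      exists J : {fset subsp n},
        (forall X, X \in J -> inL (Gen A S i') X) /\ H = (\sum_(X <- J) X)%VS
  end.

Definition generated n (A S : {fset subsp n}) (H : subsp n) : Prop :=
  exists i, Gen A S i H.

(* L(C) and L(A) are isomorphic as posets (order = reverse inclusion). *)
Definition L_iso n (C A : {fset subsp n}) : Prop :=
  exists f : subsp n -> subsp n,
    [/\ (forall X, inL (fun H => H \in C) X -> inL (fun H => H \in A) (f X)),
        (forall X Y, inL (fun H => H \in C) X -> inL (fun H => H \in C) Y ->
           f X = f Y -> X = Y),
        (forall Z, inL (fun H => H \in A) Z ->
           exists2 X, inL (fun H => H \in C) X & f X = Z) &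
        (forall X Y, inL (fun H => H \in C) X -> inL (fun H => H \in C) Y ->
           ((Y <= X)%VS <-> (f Y <= f X)%VS))].

Definition mx_image n (M : 'M[rat]_n) (A : {fset subsp n}) : {fset subsp n} :=
  [fset (linfun (fun v : Qn n => v *m M) @: H)%VS | H in A].

Definition proj_unique n (A : {fset subsp n}) : Prop :=
  forall C : {fset subsp n}, arrangement C -> L_iso C A ->
    exists2 M : 'M[rat]_n, M \in unitmx & C = mx_image M A.

From HB Require Import structures.
From mathcomp Require Import all_boot all_order all_algebra.
From mathcomp Require Import finmap zify.
Set Implicit Arguments.
Unset Strict Implicit.
Unset Printing Implicit Defensive.
Import Order.TTheory GRing.Theory Num.Theory.
Local Open Scope ring_scope.

(* Generation: if G[J] is connected and w is a neighbour of J outside it, then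
   H_J = (H_(J+w) :&: H_w) + \bigcap_(i in J) H_i, so adding the vertices of [n] to J
   one at a time exhibits H_J in Gen_(n - |J|) of the frame S.

   Projective uniqueness: a lattice isomorphism f : L(C) -> L(A) maps hyperplanes to
   hyperplanes.  The f-preimages of the n + 1 hyperplanes of S are in general position
   (their intersections map to coordinate axes), so a single M in GL_n carries S onto
   them.  Then M and f^-1 agree on all of <S> = A: both commute with intersections, and
   if H = \sum X_j then M(H) = \sum M(X_j) lies in f^-1(H), two hyperplanes that must
   coincide. *)

Section BigVspace.
Variables (K : fieldType) (vT : vectType K) (I : eqType).
Implicit Types (r : seq I) (P : pred I) (F : I -> {vspace vT}).

Lemma memv_bigcapP r P F w :
  reflect (forall i, i \in r -> P i -> w \in F i) (w \in \bigcap_(i <- r | P i) F i)%VS.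
Proof.
rewrite (big_morph (fun U : {vspace vT} => w \in U) (memv_cap w) (memvf w)) big_all_cond.
by apply: (iffP allP) => wF i ir; [apply/implyP/wF | apply/implyP/wF].
Qed.

Lemma subv_bigsumP r P F U :
  reflect (forall i, i \in r -> P i -> F i <= U)%VS (\sum_(i <- r | P i) F i <= U)%VS.
Proof.
have subv_addl V1 V2 : (V1 + V2 <= U)%VS = (V1 <= U)%VS && (V2 <= U)%VS := subv_add V1 V2 U.
rewrite (big_morph (fun V : {vspace vT} => V <= U)%VS subv_addl (sub0v U)) big_all_cond.
by apply: (iffP allP) => sFU i ir; [apply/implyP/sFU | apply/implyP/sFU].
Qed.

End BigVspace.

Section CoordinateHyperplanes.
Variable n : nat.
Implicit Types (I : {set 'I_n}) (v w : Qn n).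

Definition sum_coords I v : rat^o := \sum_(i in I) v ord0 i.

Fact sum_coords_is_linear I : linear (sum_coords I).
Proof.
move=> a u v; rewrite /sum_coords scaler_sumr -big_split.
by apply: eq_bigr => i _; rewrite !mxE.
Qed.

HB.instance Definition _ I :=
  GRing.isLinear.Build rat (Qn n) rat^o _ (sum_coords I) (sum_coords_is_linear I).

Lemma sumformE I v : sumform I v = \sum_(i in I) v ord0 i.
Proof. exact: (lfunE (sum_coords I)). Qed.

Lemma memv_HI I w : (w \in HI I) = (\sum_(i in I) w ord0 i == 0).
Proof. by rewrite memv_ker sumformE. Qed.

Lemma memv_HI1 (i : 'I_n) w : (w \in HI [set i]) = (w ord0 i == 0).
Proof. by rewrite memv_HI big_set1. Qed.

Lemma sumform_delta I (i : 'I_n) : sumform I (delta_mx 0 i) = (i \in I)%:R.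
Proof.
have delta0 j : j != i -> delta_mx 0 i ord0 j = 0 :> rat.
  by move=> ji; rewrite mxE eq_sym (negbTE ji) andbF.
rewrite sumformE; have [iI | iNI] := boolP (i \in I).
  rewrite (big_setD1 i iI) /= mxE !eqxx big1 ?addr0 // => j.
  by rewrite in_setD1 => /andP[/delta0].
by rewrite big1 // => j jI; apply: delta0; apply: contraNneq iNI => <-.
Qed.

Lemma delta_memv_HI I (i : 'I_n) : (delta_mx 0 i \in HI I) = (i \notin I).
Proof. by rewrite memv_ker sumform_delta; case: (i \in I); rewrite ?oner_eq0 ?eqxx. Qed.

Lemma delta_in_line (i : 'I_n) : delta_mx 0 i \in (\bigcap_(j | j != i) HI [set j])%VS.
Proof. by apply/memv_bigcapP => j _ ji; rewrite delta_memv_HI in_set1 eq_sym. Qed.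

End CoordinateHyperplanes.

Section Hyperplanes.
Variable n : nat.
Implicit Types (I : {set 'I_n}) (K U : subsp n).

Lemma dimQn : \dim (fullv : subsp n) = n.
Proof. by rewrite dimvf /dim /= mul1n. Qed.

Lemma dimHI I : I != set0 -> \dim (HI I) = n.-1.
Proof.
case/set0Pn => i iI; have := limg_ker_dim (sumform I) fullv.
rewrite capfv dimQn; suff -> : \dim (limg (sumform I)) = 1%N.
  by move=> dimE; rewrite -[in RHS]dimE addn1.
apply/eqP; rewrite eqn_leq; have := dimvS (subvf (limg (sumform I))); rewrite dimvf => -> /=.
rewrite lt0n dimv_eq0; apply/eqP => img0.
have := memv_img (sumform I) (memvf (delta_mx 0 i)).
by rewrite img0 memv0 sumform_delta iI oner_eq0.
Qed.

Lemma hyperplane_neq_full K : (0 < n)%N -> \dim K = n.-1 -> K != fullv.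
Proof. by move=> n0 dK; apply/eqP => KT; move: dK; rewrite KT dimQn; lia. Qed.

Lemma hyperplane_maximal K U : \dim K = n.-1 -> (K <= U)%VS -> U != fullv -> K = U.
Proof.
move=> dK KU UT; apply/eqP; rewrite eqEdim KU dK /=.
have : (\dim U < \dim (fullv : subsp n))%N.
  by rewrite ltnNge; apply: contra UT => le; rewrite eqEdim subvf le.
rewrite dimQn; lia.
Qed.

Lemma hyperplane_kernel K : (0 < n)%N -> \dim K = n.-1 ->
  exists a : 'cV[rat]_n, forall w, (w \in K) = ((w *m a) 0 0 == 0).
Proof.
(* [K] is the kernel of the projection [pi] onto the line [K^C] along [K], and a
   nonzero coordinate of that line turns [pi] into a linear form. *)
move=> n0 dK; set W := (K^C)%VS; set pi := daddv_pi W K.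
have dW : \dim W = 1%N by rewrite dimv_compl dimQn dK; lia.
have WK0 : (W :&: K = 0)%VS by rewrite capvC capv_compl.
have memK w : (w \in K) = (pi w == 0).
  have piD : pi w + daddv_pi K W w = w.
    by apply: daddv_pi_add => //; rewrite addvC addv_complf memvf.
  apply/idP/eqP => [wK | piw0]; last by rewrite -piD piw0 add0r memv_pi.
  by apply: (addIr w); rewrite -[in RHS]piD daddv_pi_id ?add0r // capvC.
have [u u0 Wu] : exists2 u : 'rV[rat]_n, u != 0 & W = <[u]>%VS.
  exists (vpick W); first by rewrite vpick0 -dimv_eq0 dW.
  by apply/eqP; rewrite eq_sym eqEdim -memvE memv_pick dim_vline vpick0 -dimv_eq0 dW.
have [j uj] : exists j, u ord0 j != 0.
  apply/existsP; apply: contraR u0 => /existsPn uj0; apply/eqP/rowP => j.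
  by rewrite mxE; apply/eqP; rewrite -[_ == _]negbK uj0.
exists (\col_k pi (delta_mx 0 k) ord0 j) => w.
have -> : (w *m \col_k pi (delta_mx 0 k) ord0 j) 0 0 = pi w ord0 j.
  rewrite mxE {2}(row_sum_delta w) linear_sum summxE.
  by apply: eq_bigr => k _; rewrite linearZ !mxE.
rewrite memK; have [c ->] : exists c, pi w = c *: u by apply/vlineP; rewrite -Wu memv_pi.
by rewrite mxE scaler_eq0 mulf_eq0 (negbTE u0) (negbTE uj) !orbF.
Qed.

End Hyperplanes.

Section MatrixImage.
Variable n : nat.
Implicit Types (M : 'M[rat]_n) (U V : subsp n).

Definition mx_img M U : subsp n := (linfun (fun v : Qn n => v *m M) @: U)%VS.

Lemma mx_lfunE M v : linfun (fun v : Qn n => v *m M) v = v *m M.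
Proof. exact: lfunE (mulmxr M) v. Qed.

Lemma memv_mx_img M U w : M \in unitmx -> (w \in mx_img M U) = (w *m invmx M \in U).
Proof.
move=> Munit; apply/memv_imgP/idP => [[u uU ->] | wU]; first by rewrite mx_lfunE mulmxK.
by exists (w *m invmx M); rewrite // mx_lfunE mulmxKV.
Qed.

Lemma mx_img_cap M U V : M \in unitmx -> mx_img M (U :&: V) = (mx_img M U :&: mx_img M V)%VS.
Proof. by move=> Munit; apply/vspaceP => w; rewrite memv_cap !memv_mx_img // memv_cap. Qed.

Lemma mx_img_bigcap (I : Type) (r : seq I) (P : pred I) (F : I -> subsp n) M :
  M \in unitmx ->
  mx_img M (\bigcap_(i <- r | P i) F i) = (\bigcap_(i <- r | P i) mx_img M (F i))%VS.
Proof.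
move=> Munit; elim/big_rec2: _ => [|i U V _ <-]; last exact: mx_img_cap.
by apply/vspaceP => w; rewrite memv_mx_img // !memvf.
Qed.

Lemma dim_mx_img M U : M \in unitmx -> \dim (mx_img M U) = \dim U.
Proof.
move=> Munit; apply: limg_dim_eq; apply/eqP; rewrite -subv0; apply/subvP => w.
rewrite memv_cap memv_ker mx_lfunE memv0 => /andP[_ /eqP wM0].
by rewrite -[w](mulmxK Munit) wM0 mul0mx.
Qed.

End MatrixImage.

Lemma unitmx_dual_basis n (a : 'I_n -> 'cV[rat]_n) (u : 'I_n -> 'rV[rat]_n) :
  (forall i j, j != i -> (u i *m a j) 0 0 = 0) -> (forall i, (u i *m a i) 0 0 != 0) ->
  \matrix_(j, i) a i j 0 \in unitmx.
Proof.
move=> uaji uaii; pose d := \row_i (u i *m a i) 0 0.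
set P := \matrix_(j, i) a i j 0; set Umx := \matrix_(i, j) u i 0 j.
have UPE i j : (Umx *m P) i j = (u i *m a j) 0 0.
  by rewrite !mxE; apply: eq_bigr => k _; rewrite !mxE.
have UPd : Umx *m P = diag_mx d.
  apply/matrixP => i j; have [<- | ij] := eqVneq i j; first by rewrite UPE !mxE eqxx.
  by rewrite UPE uaji 1?eq_sym // !mxE (negbTE ij).
have : Umx *m P \in unitmx.
  by rewrite UPd unitmxE det_diag unitfE; apply/prodf_neq0 => i _; rewrite mxE.
by rewrite unitmx_mul => /andP[].
Qed.

Lemma exists_mx_img_frame n (K : 'I_n -> subsp n) (K0 : subsp n) : (0 < n)%N ->
  (forall i, \dim (K i) = n.-1) -> \dim K0 = n.-1 ->
  (forall i, ~~ (\bigcap_(j | j != i) K j <= K i)%VS) ->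
  (forall i, ~~ (\bigcap_(j | j != i) K j <= K0)%VS) ->
  exists2 M, M \in unitmx &
    (forall i, mx_img M (HI [set i]) = K i) /\ mx_img M (HI [set: 'I_n]) = K0.
Proof.
move=> n0 dK dK0 KiN K0N.
have [a Ka] := fin_all_exists (fun i => hyperplane_kernel n0 (dK i)).
have [a0 Ka0] := hyperplane_kernel n0 dK0.
have memW i (w : Qn n) : reflect (forall j, j != i -> (w *m a j) 0 0 = 0)
                        (w \in \bigcap_(j | j != i) K j)%VS.
  apply: (iffP (memv_bigcapP _ _ _ _)) => wK j => [ji | _ ji]; last by rewrite Ka wK.
  by apply/eqP; rewrite -Ka wK ?mem_index_enum.
pose P := \matrix_(j, i) a i j 0.
have PE (w : Qn n) i : (w *m P) 0 i = (w *m a i) 0 0.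
  by rewrite !mxE; apply: eq_bigr => j _; rewrite !mxE.
have Punit : P \in unitmx.
  have [u uW uK] := fin_all_exists2 (fun i => subvPn (KiN i)).
  by apply: (unitmx_dual_basis (u := u)) => [i|i]; [apply/memW | rewrite -Ka].
pose T := invmx P *m a0.
have a0E (w : Qn n) : (w *m a0) 0 0 = \sum_i (w *m a i) 0 0 * T i 0.
  have -> : a0 = P *m T by rewrite mulKVmx.
  by rewrite mulmxA mxE; apply: eq_bigr => i _; rewrite PE.
have a0W i (w : Qn n) : (forall j, j != i -> (w *m a j) 0 0 = 0) ->
    (w *m a0) 0 0 = (w *m a i) 0 0 * T i 0.
  by move=> wa; rewrite a0E (bigD1 i) //= big1 ?addr0 // => j /wa ->; rewrite mul0r.
have Tnz i : T i 0 != 0.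
  have [w /memW wW wK0] := subvPn (K0N i).
  by apply: contraNneq wK0 => Ti0; rewrite Ka0 (a0W i w wW) Ti0 mulr0.
(* The columns of [Q] are the forms of the [K i], rescaled so that they add up to the
   form of [K0]. *)
pose Q := P *m diag_mx (\row_i T i 0).
have QE (w : Qn n) i : (w *m Q) 0 i = (w *m a i) 0 0 * T i 0.
  by rewrite mulmxA mul_mx_diag mxE PE; congr (_ * _); rewrite mxE.
have Qunit : Q \in unitmx.
  rewrite unitmx_mul Punit unitmxE det_diag unitfE.
  by apply/prodf_neq0 => i _; rewrite mxE.
exists (invmx Q); first by rewrite unitmx_inv.
have memQ U (w : Qn n) : (w \in mx_img (invmx Q) U) = (w *m Q \in U).
  by rewrite memv_mx_img ?unitmx_inv // invmxK.
split => [i|]; apply/vspaceP => w; rewrite memQ.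
  by rewrite memv_HI1 QE Ka mulf_eq0 (negbTE (Tnz i)) orbF.
rewrite memv_HI Ka0 a0E; congr (_ == 0).
by apply: eq_big => [i|i _]; rewrite ?in_setT ?QE.
Qed.

Local Open Scope fset_scope.

Section IntersectionLattice.
Variable n : nat.
Implicit Types (P Q : subsp n -> Prop) (X Y : subsp n).

Lemma inL_full P : inL P fullv.
Proof. by exists fset0; split => //; rewrite big_seq_fset0. Qed.

Lemma inL_mem P X : P X -> inL P X.
Proof.
move=> PX; exists [fset X]; split; last by rewrite big_seq_fset1.
by move=> H; rewrite in_fset1 => /eqP->.
Qed.

Lemma inL_cap P X Y : inL P X -> inL P Y -> inL P (X :&: Y)%VS.
Proof.
move=> [B1 [P1 ->]] [B2 [P2 ->]]; exists (B1 `|` B2); split.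
  by move=> H; rewrite in_fsetU => /orP[/P1|/P2].
apply/vspaceP => w; rewrite memv_cap.
apply/andP/(memv_bigcapP _ _ _ _) => [[/memv_bigcapP w1 /memv_bigcapP w2] H | wB].
  by rewrite in_fsetU => /orP[/w1|/w2]; apply.
by split; apply/memv_bigcapP => H HB _; apply: wB; rewrite // in_fsetU HB ?orbT.
Qed.

Lemma inL_bigcap P (I : Type) (r : seq I) (Pi : pred I) (F : I -> subsp n) :
  (forall i, Pi i -> inL P (F i)) -> inL P (\bigcap_(i <- r | Pi i) F i)%VS.
Proof.
move=> LF; elim/big_rec: _ => [|i X /LF LFi LX]; [exact: inL_full | exact: inL_cap].
Qed.

Lemma inL_subv_mem P X : inL P X -> X != fullv -> exists2 H, P H & (X <= H)%VS.
Proof.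
case=> B [BP ->]; have [-> | [H HB]] := fset_0Vmem B; first by rewrite big_seq_fset0 eqxx.
by exists H; [exact: BP | apply/subvP => w /memv_bigcapP; apply].
Qed.

End IntersectionLattice.

Section Generation.
Variables (n : nat) (A S : {fset subsp n}).
Hypothesis SA : {subset S <= A}.
Implicit Types (H X Y : subsp n).

Lemma Gen_mem k H : Gen A S k H -> H \in A.
Proof. by case: k => [/SA|k []]. Qed.

Lemma Gen_succ k H : Gen A S k H -> Gen A S k.+1 H.
Proof.
move=> GH; split; first exact: Gen_mem GH.
exists [fset H]; split; last by rewrite big_seq_fset1.
by move=> X; rewrite in_fset1 => /eqP->; apply: inL_mem.
Qed.

Lemma Gen_leq k l H : (k <= l)%N -> Gen A S k H -> Gen A S l H.
Proof. by move/subnK <-; elim: (l - k)%N => [//|d IH] /IH; apply: Gen_succ. Qed.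

Lemma Gen_add k X Y : (X + Y)%VS \in A ->
  inL (Gen A S k) X -> inL (Gen A S k) Y -> Gen A S k.+1 (X + Y)%VS.
Proof.
move=> XYA LX LY; split => //; exists [fset X; Y]; split.
  by move=> Z; rewrite in_fset2 => /orP[]/eqP->.
have /subv_bigsumP sup := subvv (\sum_(Z <- [fset X; Y]) Z)%VS.
apply: subv_anti; rewrite subv_add !sup ?in_fset2 ?eqxx ?orbT //=.
by apply/subv_bigsumP => Z; rewrite in_fset2 => /orP[]/eqP-> _; rewrite ?addvSl ?addvSr.
Qed.

End Generation.

Lemma path_exit (T : Type) (R : rel T) (J : {pred T}) x p :
  path R x p -> x \in J -> last x p \notin J -> exists u w, [/\ u \in J, w \notin J & R u w].
Proof.
elim: p x => [|y p IH] x /=; first by move=> _ ->.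
case/andP=> Rxy Ryp xJ; have [yJ | yNJ] := boolP (y \in J); first exact: IH.
by move=> _; exists x, y.
Qed.

Section Graph.
Variables (n : nat) (e : rel 'I_n).

Lemma exists_edge_out (J : {set 'I_n}) : graph_connected e -> J != set0 -> J != setT ->
  exists u w, [/\ u \in J, w \notin J & e u w].
Proof.
move=> conn /set0Pn [x xJ]; rewrite -properT => /properP [_ [y _ yNJ]].
have /connectP [p xp yE] : connect [rel u v | [&& u \in setT, v \in setT & e u v]] x y.
  by have /forallP /(_ x) := conn; rewrite in_setT /= => /forallP /(_ y); rewrite in_setT.
rewrite yE in yNJ; have [u [w [uJ wNJ /and3P [_ _ euw]]]] := path_exit xp xJ yNJ.
by exists u, w.
Qed.

Lemma induced_connected_setU1 (J : {set 'I_n}) u w : symmetric e ->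
  induced_connected e J -> u \in J -> e u w -> induced_connected e (w |: J).
Proof.
move=> esym cJ uJ euw.
pose R := [rel x y | [&& x \in w |: J, y \in w |: J & e x y]].
have cJR x y : x \in J -> y \in J -> connect R x y.
  move=> xJ yJ; have /forallP /(_ x) := cJ; rewrite xJ => /forallP /(_ y); rewrite yJ /=.
  apply: connect_sub => a b /= /and3P [aJ bJ eab]; apply: connect1.
  by rewrite /= !in_setU1 aJ bJ eab !orbT.
have Ruw : connect R u w by apply: connect1; rewrite /= !in_setU1 uJ eqxx orbT.
have Rwu : connect R w u by apply: connect1; rewrite /= !in_setU1 uJ eqxx orbT esym.
apply/forallP => x; apply/implyP; rewrite in_setU1 => /orP [/eqP-> | xJ];
apply/forallP => y; apply/implyP; rewrite in_setU1 => /orP [/eqP-> | yJ].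
- exact: connect0.
- exact: connect_trans Rwu (cJR _ _ uJ yJ).
- exact: connect_trans (cJR _ _ xJ uJ) Ruw.
- exact: cJR.
Qed.

Lemma conn_sets_grow (J : {set 'I_n}) : simple_graph e -> graph_connected e ->
  conn_sets e J -> J != setT -> exists2 w, w \notin J & conn_sets e (w |: J).
Proof.
move=> [esym _] conn /andP [J0 cJ] JT.
have [u [w [uJ wNJ euw]]] := exists_edge_out conn J0 JT.
exists w => //; apply/andP; split; last exact: induced_connected_setU1 cJ uJ euw.
by apply/set0Pn; exists w; rewrite setU11.
Qed.

End Graph.

Definition frame n : {fset subsp n} :=
  [fset HI [set i] | i in 'I_n] `|` [fset HI [set: 'I_n]].

Lemma HI_decomp n (J : {set 'I_n}) w : w \notin J ->
  HI J = (HI (w |: J) :&: HI [set w] + \bigcap_(i in J) HI [set i])%VS.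
Proof.
move=> wNJ; have memJ (v : Qn n) : reflect (forall i, i \in J -> v 0 i = 0)
                                            (v \in \bigcap_(i in J) HI [set i])%VS.
  apply: (iffP (memv_bigcapP _ _ _ _)) => vJ i => [iJ | _ iJ]; last by rewrite memv_HI1 vJ.
  by apply/eqP; rewrite -memv_HI1 vJ ?mem_index_enum.
apply/vspaceP => v; apply/idP/idP => [vJ | /memv_addP [u]].
  pose a : Qn n := \row_i (if i \in J then v 0 i else 0).
  apply/memv_addP; exists a; last (exists (v - a); last by rewrite addrC subrK).
    rewrite memv_cap (memv_HI1 w) memv_HI big_setU1 //= !mxE (negbTE wNJ) add0r eqxx andbT.
    have -> : \sum_(i in J) a ord0 i = \sum_(i in J) v ord0 i.
      by apply: eq_bigr => i iJ; rewrite mxE iJ.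
    by rewrite -memv_HI.
  by apply/memJ => i iJ; rewrite !mxE iJ subrr.
rewrite memv_cap (memv_HI1 w) memv_HI big_setU1 //= => /andP [/eqP uJw /eqP uw].
move=> [z /memJ zJ ->]; rewrite uw add0r in uJw; rewrite memv_HI -[X in _ == X]uJw.
by apply/eqP/eq_bigr => i iJ; rewrite mxE zJ ?addr0.
Qed.

Section ConnectedSubgraphArrangement.
Variables (n : nat) (e : rel 'I_n).
Hypotheses (n_gt0 : (0 < n)%N) (e_simple : simple_graph e) (e_conn : graph_connected e).

Lemma HI_in_AG I : conn_sets e I -> HI I \in AG e.
Proof. by move=> cI; apply/imfsetP; exists I. Qed.

Lemma arrangement_AG : arrangement (AG e).
Proof. by move=> H /imfsetP [I /andP [I0 _] ->]; apply: dimHI. Qed.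

Lemma conn_sets1 i : conn_sets e [set i].
Proof.
rewrite /conn_sets -card_gt0 cards1 /=.
apply/forallP => x; apply/implyP; rewrite in_set1 => /eqP->.
by apply/forallP => y; apply/implyP; rewrite in_set1 => /eqP->; apply: connect0.
Qed.

Lemma conn_setsT : conn_sets e [set: 'I_n].
Proof. by rewrite /conn_sets -card_gt0 cardsT card_ord n_gt0. Qed.

Lemma frame_sub_AG : {subset frame n <= AG e}.
Proof.
move=> H; rewrite in_fsetU in_fset1 => /orP [/imfsetP [i _ ->] | /eqP ->].
  exact/HI_in_AG/conn_sets1.
exact/HI_in_AG/conn_setsT.
Qed.

Lemma Gen_frame_HI1 d i : Gen (AG e) (frame n) d (HI [set i]).
Proof.
apply: (Gen_leq frame_sub_AG (leq0n d)).
by rewrite /= in_fsetU; apply/orP; left; apply/imfsetP; exists i.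
Qed.

Lemma Gen_frame_HI d J : conn_sets e J -> (#|J| + d)%N = n -> Gen (AG e) (frame n) d (HI J).
Proof.
elim: d J => [|d IH] J cJ cardJ.
  have -> : J = setT by apply/eqP; rewrite eqEcard subsetT cardsT card_ord; lia.
  by rewrite /= in_fsetU in_fset1 eqxx orbT.
have JT : J != setT by apply/eqP => JT; move: cardJ; rewrite JT cardsT card_ord; lia.
have [w wNJ cwJ] := conn_sets_grow e_simple e_conn cJ JT.
have Gw : Gen (AG e) (frame n) d (HI (w |: J)).
  by apply: IH cwJ _; rewrite cardsU1 wNJ; lia.
rewrite (HI_decomp wNJ); apply: Gen_add; first by rewrite -(HI_decomp wNJ) HI_in_AG.
  by apply: inL_cap; apply: inL_mem; [exact: Gw | exact: Gen_frame_HI1].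
by apply: inL_bigcap => i _; apply/inL_mem/Gen_frame_HI1.
Qed.

Lemma generated_AG H : generated (AG e) (frame n) H <-> H \in AG e.
Proof.
split => [[k /(Gen_mem frame_sub_AG)] // | /imfsetP [I /= cI ->]].
exists (n - #|I|)%N; apply: Gen_frame_HI => //.
have : (#|I| <= n)%N by rewrite -[X in (_ <= X)%N]card_ord max_card.
lia.
Qed.

End ConnectedSubgraphArrangement.

Section LatticeIsomorphism.
Variables (n : nat) (A C : {fset subsp n}) (f : subsp n -> subsp n).
Hypotheses (n_gt0 : (0 < n)%N) (A_arr : arrangement A) (C_arr : arrangement C).
Let LC := inL (fun H => H \in C).
Let LA := inL (fun H => H \in A).
Hypotheses (f_LA : forall X, LC X -> LA (f X))
  (f_inj : forall X Y, LC X -> LC Y -> f X = f Y -> X = Y)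
  (f_surj : forall Z, LA Z -> exists2 X, LC X & f X = Z)
  (f_le : forall X Y, LC X -> LC Y -> ((Y <= X)%VS <-> (f Y <= f X)%VS)).

Lemma f_full : f fullv = fullv.
Proof.
have [X LX fX] := f_surj (inL_full _).
by apply: subv_anti; rewrite subvf -{1}fX; apply/(f_le (inL_full _) LX); rewrite subvf.
Qed.

Lemma f_cap X Y : LC X -> LC Y -> f (X :&: Y)%VS = (f X :&: f Y)%VS.
Proof.
move=> LX LY; have LXY := inL_cap LX LY.
have [Z LZ fZ] := f_surj (inL_cap (f_LA LX) (f_LA LY)).
apply: subv_anti; apply/andP; split.
  by rewrite subv_cap; apply/andP; split; [apply/(f_le LX LXY) | apply/(f_le LY LXY)];
     rewrite ?capvSl ?capvSr.
rewrite -fZ; apply/(f_le LXY LZ); rewrite subv_cap.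
by apply/andP; split; [apply/(f_le LX LZ) | apply/(f_le LY LZ)]; rewrite fZ ?capvSl ?capvSr.
Qed.

Lemma f_bigcap (I : Type) (r : seq I) (P : pred I) (F : I -> subsp n) :
  (forall i, P i -> LC (F i)) ->
  f (\bigcap_(i <- r | P i) F i)%VS = (\bigcap_(i <- r | P i) f (F i))%VS.
Proof.
move=> LF; elim: r => [|i r IH]; first by rewrite !big_nil f_full.
rewrite !big_cons; case: ifP => // /LF LFi.
by rewrite f_cap -?IH //; apply: inL_bigcap.
Qed.

Lemma LC_mem c : c \in C -> LC c.
Proof. exact: inL_mem. Qed.

Lemma LA_mem H : H \in A -> LA H.
Proof. exact: inL_mem. Qed.

Lemma f_eq_full X : LC X -> f X = fullv -> X = fullv.
Proof. by move=> LX fX; apply: f_inj; rewrite ?f_full //; apply: inL_full. Qed.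

Lemma preimage_mem_C H X : H \in A -> LC X -> f X = H -> X \in C.
Proof.
move=> HA LX fXH; have dH := A_arr HA.
have XT : X != fullv.
  by apply: contra (hyperplane_neq_full n_gt0 dH) => /eqP XT; rewrite -fXH XT f_full.
have [c cC Xc] := inL_subv_mem LX XT; suff -> : X = c by [].
have cT := hyperplane_neq_full n_gt0 (C_arr cC).
apply: f_inj (LC_mem cC) _ => //; rewrite fXH; apply: hyperplane_maximal dH _ _.
  by rewrite -fXH; apply/(f_le (LC_mem cC) LX).
by apply: contra cT => /eqP /(f_eq_full (LC_mem cC)) ->.
Qed.

Lemma f_mem_A c : c \in C -> f c \in A.
Proof.
move=> cC; have cT := hyperplane_neq_full n_gt0 (C_arr cC).
have fcT : f c != fullv by apply: contra cT => /eqP /(f_eq_full (LC_mem cC)) ->.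
have [H HA fcH] := inL_subv_mem (f_LA (LC_mem cC)) fcT.
have [X LX fX] := f_surj (LA_mem HA).
have XT : X != fullv.
  by apply: contra (hyperplane_neq_full n_gt0 (A_arr HA)) => /eqP XT; rewrite -fX XT f_full.
rewrite (@hyperplane_maximal _ c X) ?fX //; first exact: C_arr.
by apply/(f_le LX (LC_mem cC)); rewrite fX.
Qed.

Definition mx_preimage M H := LC (mx_img M H) /\ f (mx_img M H) = H.

Lemma mx_preimage_bigcap M (B : seq (subsp n)) : M \in unitmx ->
  (forall H, H \in B -> mx_preimage M H) -> mx_preimage M (\bigcap_(H <- B) H).
Proof.
move=> Munit preB; rewrite /mx_preimage big_seq mx_img_bigcap //.
have LB H : H \in B -> LC (mx_img M H) by case/preB.
split; first exact: inL_bigcap.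
by rewrite f_bigcap //; apply: eq_bigr => H /preB [].
Qed.

Lemma mx_preimage_Gen M (T : {fset subsp n}) : M \in unitmx ->
  (forall H, H \in T -> mx_preimage M H) -> forall k H, Gen A T k H -> mx_preimage M H.
Proof.
move=> Munit preT; elim=> [|k IH] H; first exact: preT.
case=> HA [J [JL HJ]]; have [X LX fXH] := f_surj (LA_mem HA).
have preJ Y : Y \in J -> mx_preimage M Y.
  by case/JL => B [BG ->]; apply: mx_preimage_bigcap => // Z /BG /IH.
rewrite /mx_preimage; suff -> : mx_img M H = X by [].
apply: hyperplane_maximal; first by rewrite dim_mx_img //; apply: A_arr.
  rewrite HJ /mx_img limg_sum; apply/subv_bigsumP => Y YJ _.
  have [LY fY] := preJ Y YJ; apply/(f_le LX LY); rewrite fY fXH HJ.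
  by have /subv_bigsumP := subvv (\sum_(Z <- J) Z)%VS; apply.
exact/hyperplane_neq_full/C_arr/(preimage_mem_C HA LX fXH).
Qed.

Lemma C_eq_mx_image M : M \in unitmx ->
  (forall H, H \in A -> mx_preimage M H) -> C = mx_image M A.
Proof.
move=> Munit preA; apply/fsetP => c; apply/idP/imfsetP => [cC | [H HA ->]].
  have fcA := f_mem_A cC; have [LM fM] := preA _ fcA.
  by exists (f c) => //; apply: f_inj (LC_mem cC) LM _; rewrite fM.
by have [LM fM] := preA H HA; apply: preimage_mem_C HA LM fM.
Qed.

Lemma frame_mx_preimage : {subset frame n <= A} ->
  exists2 M, M \in unitmx & forall H, H \in frame n -> mx_preimage M H.
Proof.
move=> SA; have HI1_frame i : HI [set i] \in frame n.
  by rewrite in_fsetU; apply/orP; left; apply/imfsetP; exists i.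
have HIT_frame : HI [set: 'I_n] \in frame n by rewrite in_fsetU in_fset1 eqxx orbT.
have [K LK fK] := fin_all_exists2 (fun i => f_surj (LA_mem (SA _ (HI1_frame i)))).
have [K0 LK0 fK0] := f_surj (LA_mem (SA _ HIT_frame)).
have delta_notin_HI1 (i : 'I_n) : delta_mx 0 i \notin HI [set i].
  by rewrite delta_memv_HI in_set1 eqxx.
have delta_notin_HIT (i : 'I_n) : delta_mx 0 i \notin HI [set: 'I_n].
  by rewrite delta_memv_HI in_setT.
have dimC X H : LC X -> f X = H -> H \in frame n -> \dim X = n.-1.
  by move=> LX fXH /SA HA; apply/C_arr/(preimage_mem_C HA LX fXH).
have notin_preimage (i : 'I_n) X H : LC X -> f X = H -> delta_mx 0 i \notin H ->
    ~~ (\bigcap_(j | j != i) K j <= X)%VS.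
  move=> LX fXH deltaNH; have LW : LC (\bigcap_(j | j != i) K j)%VS.
    by apply: inL_bigcap => j _; apply: LK.
  apply/negP => /(f_le LX LW).
  rewrite f_bigcap // fXH (eq_bigr _ (fun j _ => fK j)) => /subvP /(_ _ (delta_in_line i)).
  by apply/negP.
have [M Munit [MK MK0]] := exists_mx_img_frame n_gt0
  (fun i => dimC _ _ (LK i) (fK i) (HI1_frame i)) (dimC _ _ LK0 fK0 HIT_frame)
  (fun i => notin_preimage i _ _ (LK i) (fK i) (delta_notin_HI1 i))
  (fun i => notin_preimage i _ _ LK0 fK0 (delta_notin_HIT i)).
exists M => // H; rewrite in_fsetU in_fset1 => /orP [/imfsetP [i _ ->] | /eqP ->].
  by rewrite /mx_preimage MK.
by rewrite /mx_preimage MK0.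
Qed.

End LatticeIsomorphism.

Theorem proj_unique_of_generated_frame n (A : {fset subsp n}) :
  (0 < n)%N -> arrangement A -> {subset frame n <= A} ->
  (forall H, H \in A -> generated A (frame n) H) -> proj_unique A.
Proof.
move=> n_gt0 A_arr SA genA C C_arr [f [fLA finj fsurj fle]].
have [M Munit preS] := frame_mx_preimage n_gt0 A_arr C_arr fLA finj fsurj fle SA.
exists M => //; apply: (C_eq_mx_image n_gt0 A_arr C_arr fLA finj fsurj fle Munit).
move=> H /genA [k]; exact: (mx_preimage_Gen n_gt0 A_arr C_arr fLA finj fsurj fle Munit preS).
Qed.

Theorem mainTheorem4 (n : nat) (e : rel 'I_n) :
  (0 < n)%N -> simple_graph e -> graph_connected e ->
  let S := [fset HI [set i] | i in 'I_n] `|` [fset HI [set: 'I_n]] in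
  (forall H, generated (AG e) S H <-> H \in AG e) /\ proj_unique (AG e).
Proof.
move=> n_gt0 e_simple e_conn S; have genAG := generated_AG n_gt0 e_simple e_conn.
split; first exact: genAG.
apply: (proj_unique_of_generated_frame n_gt0 (@arrangement_AG n e)).
  exact: frame_sub_AG n_gt0 e_conn.
by move=> H /genAG.
Qed.
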